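(* Let $G\neq \{0\}$ be a finite abelian group. Let $B$ be a zero-sum sequence over $G$ and let $g \in G\setminus \{0\}$. Then $\max \mathsf{L}(B(-g)g)= 1+\max \mathsf{L}(B)$. In particular, $\mathsf{D}_{k+1}(G)\ge \mathsf{D}_{k}(G)+ 2$ for each $k \in \mathbb{N}$. Moreover, if $C$ is a zero-sum sequence over $G$ with $\max \mathsf{L}(C)\le k$ and $|C|= \mathsf{D}_k(G)$, then $0$ does not occur as a term of $C$.
   Context: A sequence over $G$ is an element of the multiplicatively written free abelian monoid over $G$ (finite unordered list of elements with repetitions); $B(-g)g$ denotes $B$ with the two terms $-g$ and $g$ appended. Zero-sum means the terms sum to $0$; a minimal zero-sum sequence is a non-empty zero-sum sequence with no proper non-empty zero-sum subsequence; for a zero-sum sequence $B$, $\mathsf{L}(B)$ is the set of all $t$ such that $B$ is a product of $t$ minimal zero-sum sequences. $\mathsf{D}_k(G)$ is the smallest $\ell$ such that every sequence over $G$ of length at least $\ell$ has $k$ disjoint non-empty zero-sum subsequences. *)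

(* Finite abelian groups are written additively as finZmodType;
   sequences over G (elements of the free abelian monoid over G) are represented
   by lists [seq G], considered up to permutation (perm_eq). *)
From mathcomp Require Import all_boot all_order all_algebra.
Set Implicit Arguments. Unset Strict Implicit. Unset Printing Implicit Defensive.
Import GRing.Theory.
Local Open Scope ring_scope.

Section Defs.
Variable G : finZmodType.

Definition zero_sum (S : seq G) : Prop := \sum_(x <- S) x = 0.

Definition minimal_zero_sum (S : seq G) : Prop :=
  (0 < size S)%N /\ zero_sum S /\
  forall m : bitseq, (0 < size (mask m S))%N -> zero_sum (mask m S) ->
    size (mask m S) = size S.

Definition inL (B : seq G) (t : nat) : Prop :=
  exists fs : seq (seq G),
    size fs = t /\ (forall A, A \in fs -> minimal_zero_sum A) /\
    perm_eq (flatten fs) B.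

Definition is_maxL (B : seq G) (m : nat) : Prop :=
  inL B m /\ forall t, inL B t -> (t <= m)%N.

Definition has_disjoint_zs (k : nat) (S : seq G) : Prop :=
  exists fs : seq (seq G), exists rest : seq G,
    size fs = k /\ (forall A, A \in fs -> (0 < size A)%N /\ zero_sum A) /\
    perm_eq S (flatten fs ++ rest).

Definition Dk_prop (k l : nat) : Prop :=
  forall S : seq G, (l <= size S)%N -> has_disjoint_zs k S.

Definition is_Dk (k d : nat) : Prop :=
  Dk_prop k d /\ forall l, Dk_prop k l -> (d <= l)%N.

End Defs.

(* Deleting the two terms x, y (x != 0, x + y = 0) from a family of disjoint
   non-empty zero-sum subsequences costs at most one member: if x and y fall in
   two different members xA' and yB', then A'B' is again non-empty and zero-sum.
   Since a zero-sum sequence with k disjoint non-empty zero-sum subsequences has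
   a factorization of length at least k, this gives max L(B(-g)g) <= 1 + max L(B);
   the atom (-g)g gives the converse.  Applied to g(-g)S with |S| = D_k(G) - 1
   and no k such subsequences, it shows D_{k+1}(G) > D_k(G) + 1.  If 0 occurred in
   an extremal C = 0xS, the same applied to g(-g)S yields k - 1 pieces of S, and
   together with [0] and the zero-sum remainder containing x, k + 1 atoms. *)

From mathcomp Require Import all_boot all_order all_algebra.
From mathcomp Require Import zify.
From Stdlib Require Import Classical.
Import GRing.Theory.
Local Open Scope ring_scope.
Set Implicit Arguments. Unset Strict Implicit. Unset Printing Implicit Defensive.

Section Factorizations.
Variable G : finZmodType.
Implicit Types (A B S rest : seq G) (fs : seq (seq G)).

Lemma zero_sum_perm A B : perm_eq A B -> zero_sum A -> zero_sum B.
Proof. by rewrite /zero_sum => /(perm_big _) ->. Qed.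

Lemma zero_sum_cat A B : zero_sum A -> zero_sum B -> zero_sum (A ++ B).
Proof. by rewrite /zero_sum big_cat /= => -> ->; rewrite addr0. Qed.

Lemma zero_sum_catr A B : zero_sum A -> zero_sum (A ++ B) -> zero_sum B.
Proof. by rewrite /zero_sum big_cat /= => ->; rewrite add0r. Qed.

Lemma zero_sum_flatten fs :
  (forall A, A \in fs -> zero_sum A) -> zero_sum (flatten fs).
Proof.
elim: fs => [|A fs IH] zs_fs; first by rewrite /zero_sum big_nil.
apply: zero_sum_cat; first exact/zs_fs/mem_head.
by apply: IH => B B_fs; apply: zs_fs; rewrite inE B_fs orbT.
Qed.

Lemma zero_sum_cons_sum x A : zero_sum (x :: A) -> \sum_(a <- A) a = - x.
Proof. by rewrite /zero_sum big_cons => /eqP; rewrite addrC addr_eq0 => /eqP. Qed.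

Lemma inL_perm A B t : perm_eq A B -> inL A t -> inL B t.
Proof. by move=> eqAB [fs [? [? /permPl eqfs]]]; exists fs; rewrite eqfs. Qed.

Lemma inL_cat A B s t : inL A s -> inL B t -> inL (A ++ B) (s + t).
Proof.
move=> [fs [<- [min_fs eq_fs]]] [gs [<- [min_gs eq_gs]]].
exists (fs ++ gs); rewrite size_cat flatten_cat perm_cat //; split=> //; split=> // C.
by rewrite mem_cat => /orP[]; [apply: min_fs | apply: min_gs].
Qed.

Lemma inL0 : @inL G [::] 0.
Proof. by exists [::]. Qed.

Lemma minimal_zero_sum_inL1 A : minimal_zero_sum A -> inL A 1.
Proof.
by move=> minA; exists [:: A]; rewrite /= cats0; split=> //; split=> // C /[!inE] /eqP ->.
Qed.

Lemma minimal_zero_sum_pair (g : G) : g != 0 -> minimal_zero_sum [:: - g; g].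
Proof.
move=> g_neq0; split=> //; split; first by rewrite /zero_sum !big_cons big_nil addr0 addNr.
case=> [|[] [|[] m]] //=; rewrite /zero_sum ?mask0 ?big_cons ?big_nil ?addr0 //=.
all: try by case: m => [|[] m].
all: by move=> _ /eqP; rewrite ?oppr_eq0 (negbTE g_neq0).
Qed.

Lemma zero_sum_inL B :
  zero_sum B -> exists2 t, inL B t & ((0 < size B)%N -> (0 < t)%N).
Proof.
have [n] := ubnP (size B); elim: n B => // n IH B /ltnSE size_B zsB.
have [/size0nil -> | B_gt0] := posnP (size B); first by exists 0%N; first exact: inL0.
have [minB | not_minB] := classic (minimal_zero_sum B).
  by exists 1%N; first exact: minimal_zero_sum_inL1.
have [m [mask_gt0 zs_mask mask_lt]] : exists m,
    [/\ (0 < size (mask m B))%N, zero_sum (mask m B) & (size (mask m B) < size B)%N].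
  apply: NNPP => no_m; apply: not_minB; split=> //; split=> // m m_gt0 zs_m.
  apply/eqP; rewrite eqn_leq size_subseq ?mask_subseq //= leqNgt.
  by apply/negP => lt_mB; apply: no_m; exists m.
have [C eqB] := perm_to_subseq (mask_subseq m B).
have size_C : (size C < size B)%N.
  by rewrite (perm_size eqB) size_cat -[X in (X < _)%N]add0n ltn_add2r.
have zsC : zero_sum C by apply: zero_sum_catr zs_mask _; apply: zero_sum_perm zsB.
have [s Ls s_gt0] := IH _ (leq_trans mask_lt size_B) zs_mask.
have [t Lt _] := IH _ (leq_trans size_C size_B) zsC.
exists (s + t)%N; last by rewrite addn_gt0 s_gt0.
by apply: inL_perm (inL_cat Ls Lt); rewrite perm_sym.
Qed.

Definition zs_pieces fs := forall A, A \in fs -> (0 < size A)%N /\ zero_sum A.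

Lemma zs_pieces_sub fs fs' : {subset fs' <= fs} -> zs_pieces fs -> zs_pieces fs'.
Proof. by move=> sub_fs pieces_fs A /sub_fs /pieces_fs. Qed.

Lemma zs_pieces_perm fs fs' : perm_eq fs fs' -> zs_pieces fs -> zs_pieces fs'.
Proof. by move=> eq_fs; apply: zs_pieces_sub => A; rewrite (perm_mem eq_fs). Qed.

Lemma zs_pieces_behead A fs : zs_pieces (A :: fs) -> zs_pieces fs.
Proof. by apply: zs_pieces_sub => B B_fs; rewrite inE B_fs orbT. Qed.

Lemma zs_pieces_inL fs : zs_pieces fs -> exists2 t, (size fs <= t)%N & inL (flatten fs) t.
Proof.
elim: fs => [|A fs IH] pieces_fs; first by exists 0%N; last exact: inL0.
have [A_gt0 zsA] := pieces_fs A (mem_head _ _).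
have [s LA s_gt0] := zero_sum_inL zsA.
have [t t_ge Lt] := IH (zs_pieces_behead pieces_fs).
by exists (s + t)%N; [rewrite /= -add1n leq_add ?s_gt0 | exact: inL_cat].
Qed.

Lemma has_disjoint_zs_intro k S fs rest :
  zs_pieces fs -> perm_eq S (flatten fs ++ rest) -> (k <= size fs)%N ->
  has_disjoint_zs k S.
Proof.
move=> pieces_fs eqS k_le; exists (take k fs), (flatten (drop k fs) ++ rest).
rewrite size_take_min (minn_idPl k_le) catA -flatten_cat cat_take_drop.
by split=> //; split=> // A /mem_take /pieces_fs.
Qed.

Lemma has_disjoint_zs_perm k A B :
  perm_eq A B -> has_disjoint_zs k A -> has_disjoint_zs k B.
Proof.
move=> eqAB [fs [rest [<- [pieces_fs eqA]]]].
by apply: has_disjoint_zs_intro pieces_fs (perm_trans _ eqA) (leqnn _); rewrite perm_sym.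
Qed.

Lemma inL_has_disjoint_zs B t : inL B t -> has_disjoint_zs t B.
Proof.
move=> [fs [<- [min_fs eqB]]]; apply: (has_disjoint_zs_intro (rest := [::])) (leqnn _).
  by move=> A /min_fs[? []].
by rewrite cats0 perm_sym.
Qed.

Lemma zs_decomposition_inL B fs rest :
  zero_sum B -> zs_pieces fs -> perm_eq B (flatten fs ++ rest) ->
  exists2 t, (size fs + (0 < size rest) <= t)%N & inL B t.
Proof.
move=> zsB pieces_fs eqB; have [s s_ge Ls] := zs_pieces_inL pieces_fs.
have zs_rest : zero_sum rest.
  apply: zero_sum_catr (zero_sum_perm eqB zsB).
  by apply: zero_sum_flatten => A /pieces_fs[].
have [t Lt t_gt0] := zero_sum_inL zs_rest.
exists (s + t)%N; first by apply: leq_add; last by case: (0 < size rest)%N t_gt0 => // ->.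
by apply: inL_perm (inL_cat Ls Lt); rewrite perm_sym.
Qed.

Lemma has_disjoint_zs_inL k B :
  zero_sum B -> has_disjoint_zs k B -> exists2 t, (k <= t)%N & inL B t.
Proof.
move=> zsB [fs [rest [<- [pieces_fs eqB]]]].
have [t t_ge Lt] := zs_decomposition_inL zsB pieces_fs eqB.
by exists t; first exact: leq_trans (leq_addr _ _) t_ge.
Qed.

Lemma perm_cons_flatten_cat x S fs rest :
  perm_eq (x :: S) (flatten fs ++ rest) ->
  (exists r, perm_eq S (flatten fs ++ r)) \/
  exists A A' fs', [/\ perm_eq fs (A :: fs'), perm_eq A (x :: A')
                     & perm_eq S (flatten fs' ++ A' ++ rest)].
Proof.
move=> eqS; have := mem_head x S; rewrite (perm_mem eqS) mem_cat.
case/orP=> [/flattenP[A A_fs xA] | x_rest]; [right | left].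
  have eq_fs := perm_to_rem A_fs; have eqA := perm_to_rem xA.
  exists A, (rem x A), (rem A fs); split=> //.
  rewrite -(perm_cons x) (permPl eqS) (perm_catr _ (perm_flatten eq_fs)) /=.
  by rewrite -catA (perm_catr _ eqA) /= perm_cons perm_catCA.
exists (rem x rest); rewrite -(perm_cons x) (permPl eqS).
by rewrite (perm_catl _ (perm_to_rem x_rest)) -cat1s perm_catCA.
Qed.

Lemma has_disjoint_zs_behead k x S :
  has_disjoint_zs k (x :: S) -> has_disjoint_zs k.-1 S.
Proof.
move=> [fs [rest [<- [pieces_fs eqS]]]].
case: (perm_cons_flatten_cat eqS) => [[r eqS'] | [A [A' [fs' [eq_fs _ eqS']]]]].
  exact: has_disjoint_zs_intro pieces_fs eqS' (leq_pred _).
apply: has_disjoint_zs_intro eqS' _; last by rewrite (perm_size eq_fs).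
exact: zs_pieces_behead (zs_pieces_perm eq_fs pieces_fs).
Qed.

Lemma has_disjoint_zs_cancel k x y S : x != 0 -> x + y = 0 ->
  has_disjoint_zs k [:: x, y & S] -> has_disjoint_zs k.-1 S.
Proof.
move=> x_neq0 xy0 [fs [rest [<- [pieces_fs eqS]]]].
case: (perm_cons_flatten_cat eqS) => [[r eqS'] | [A [A' [fs' [eq_fs eqA eqS']]]]].
  exact/has_disjoint_zs_behead/(has_disjoint_zs_intro pieces_fs eqS' (leqnn _)).
have pieces_Afs' := zs_pieces_perm eq_fs pieces_fs.
have pieces_fs' := zs_pieces_behead pieces_Afs'.
rewrite (perm_size eq_fs) /=.
case: (perm_cons_flatten_cat eqS') => [[r eqS''] | [B [B' [fs'' [eq_fs' eqB eqS'']]]]].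
  exact: has_disjoint_zs_intro pieces_fs' eqS'' (leqnn _).
have pieces_Bfs'' := zs_pieces_perm eq_fs' pieces_fs'.
have sumA' := zero_sum_cons_sum (zero_sum_perm eqA (pieces_Afs' A (mem_head _ _)).2).
have sumB' := zero_sum_cons_sum (zero_sum_perm eqB (pieces_Bfs'' B (mem_head _ _)).2).
have A'_gt0 : (0 < size A')%N.
  rewrite lt0n size_eq0; apply: contra_neq x_neq0 => A'_nil.
  by apply/eqP; rewrite -oppr_eq0 -sumA' A'_nil big_nil.
(* x and y sit in different pieces xA' and yB': glue the remainders A' and B'. *)
apply: (has_disjoint_zs_intro (fs := (B' ++ A') :: fs'') (rest := rest)).
- move=> C; rewrite inE => /predU1P[-> | /(zs_pieces_behead pieces_Bfs'')//].
  split; first by rewrite size_cat ltn_addl.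
  by rewrite /zero_sum big_cat /= sumA' sumB' -opprD addrC xy0 oppr0.
- by rewrite (permPl eqS'') [B' ++ _]catA perm_catCA catA.
- by rewrite (perm_size eq_fs').
Qed.

Lemma inL_cat_pair B g t : g != 0 -> inL B t -> inL (B ++ [:: - g; g]) t.+1.
Proof.
by move=> g_neq0 LB; rewrite -addn1; apply/inL_cat/minimal_zero_sum_inL1/minimal_zero_sum_pair.
Qed.

Lemma inL_cat_pair_inv B g t : zero_sum B -> g != 0 ->
  inL (B ++ [:: - g; g]) t -> exists2 t', (t <= t'.+1)%N & inL B t'.
Proof.
move=> zsB g_neq0 /inL_has_disjoint_zs/(has_disjoint_zs_perm (permEl (perm_catC _ _))).
move=> /(has_disjoint_zs_cancel (y := g)); rewrite oppr_eq0 addNr => /(_ g_neq0 erefl).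
by case/(has_disjoint_zs_inL zsB) => t' le_t Lt'; exists t'; first by case: t le_t.
Qed.

Lemma is_maxL_cat_pair B g m : zero_sum B -> g != 0 ->
  is_maxL B m <-> is_maxL (B ++ [:: - g; g]) m.+1.
Proof.
move=> zsB g_neq0; split=> [[LB maxB] | [LBg maxBg]].
  split=> [|t /(inL_cat_pair_inv zsB g_neq0)[t' le_t /maxB le_t']]; first exact: inL_cat_pair.
  exact: leq_trans le_t _.
have [t' le_m Lt'] := inL_cat_pair_inv zsB g_neq0 LBg.
have le_t' := maxBg _ (inL_cat_pair g_neq0 Lt').
have eq_m : m = t' by apply/eqP; rewrite eqn_leq -ltnS le_m -ltnS le_t'.
subst m; split=> // t Lt; exact: maxBg _ (inL_cat_pair g_neq0 Lt).
Qed.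

Lemma has_disjoint_zs_seq1 k (g : G) : (0 < k)%N -> has_disjoint_zs k [:: g] -> g = 0.
Proof.
case: k => // k _ [[|A fs] [rest [//= _ [pieces_fs eqg]]]].
have [A_gt0 zsA] := pieces_fs A (mem_head _ _).
have /eqP/size0nil rest_nil : size (flatten fs ++ rest) == 0%N.
  by move: (perm_size eqg) A_gt0; rewrite /= -catA size_cat; lia.
move: eqg; rewrite /= -catA rest_nil cats0 perm_sym => /zero_sum_perm/(_ zsA).
by rewrite /zero_sum big_seq1.
Qed.

Lemma Dk_prop_gt1 (g : G) k d : g != 0 -> (0 < k)%N -> Dk_prop G k d -> (1 < d)%N.
Proof.
move=> g_neq0 k_gt0 Dk_d; rewrite ltnNge; apply/negP => d_le1.
by move/eqP: g_neq0; apply; apply: has_disjoint_zs_seq1 k_gt0 (Dk_d [:: g] d_le1).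
Qed.

Lemma is_Dk_succ_ge (g : G) k d d' : g != 0 -> (0 < k)%N ->
  is_Dk G k d -> is_Dk G k.+1 d' -> (d + 2 <= d')%N.
Proof.
move=> g_neq0 k_gt0 [Dk_d min_d] [Dk_d' _].
have d_gt1 := Dk_prop_gt1 g_neq0 k_gt0 Dk_d.
have not_Dk : ~ Dk_prop G k d.-1.
  by move/min_d; case: d d_gt1 {Dk_d min_d} => // n _; rewrite ltnn.
have [S S_ge not_S] : exists2 S : seq G, (d.-1 <= size S)%N & ~ has_disjoint_zs k S.
  apply: NNPP => no_S; apply: not_Dk => S S_ge; apply: NNPP => not_S.
  exact: no_S (ex_intro2 _ _ S S_ge not_S).
rewrite leqNgt; apply/negP => lt_d'; apply: not_S.
apply: has_disjoint_zs_cancel g_neq0 (subrr g) (Dk_d' _ _) => /=; lia.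
Qed.

Lemma zero_notin_Dk_extremal (g : G) k d (C : seq G) : g != 0 -> (0 < k)%N -> is_Dk G k d ->
  zero_sum C -> (forall t, inL C t -> (t <= k)%N) -> size C = d -> 0 \notin C.
Proof.
move=> g_neq0 k_gt0 [Dk_d _] zsC maxC sizeC; apply/negP => C0.
have d_gt1 := Dk_prop_gt1 g_neq0 k_gt0 Dk_d.
have eqC := perm_to_rem C0; have := perm_size eqC; rewrite sizeC.
case: (rem 0 C) eqC => [|x S] eqC /= size_S; first by rewrite size_S in d_gt1.
have [fs [rest [size_fs [pieces_fs eqS]]]] :=
  has_disjoint_zs_cancel g_neq0 (subrr g) (Dk_d [:: g, - g & S] (eq_leq size_S)).
have pieces_0fs : zs_pieces ([:: 0] :: fs).
  move=> A; rewrite inE => /predU1P[-> | /pieces_fs //].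
  by split=> //; rewrite /zero_sum big_seq1.
have eqC' : perm_eq C (flatten ([:: 0] :: fs) ++ x :: rest).
  rewrite (permPl eqC) /= perm_cons perm_sym (perm_catCA _ [:: x]) /= perm_cons.
  by rewrite perm_sym.
have [t t_ge /maxC t_le] := zs_decomposition_inL zsC pieces_0fs eqC'.
by move: t_ge; rewrite /= size_fs; lia.
Qed.

End Factorizations.

Theorem lemma6p1 (G : finZmodType) (hG : (1 < #|G|)%N) :
  (forall (B : seq G) (g : G), zero_sum B -> g != 0 ->
     forall m : nat, is_maxL B m <-> is_maxL (B ++ [:: - g; g]) m.+1)
  /\
  (forall (k d d' : nat), (1 <= k)%N -> is_Dk G k d -> is_Dk G k.+1 d' ->
     (d + 2 <= d')%N)
  /\
  (forall (k d : nat) (C : seq G), (1 <= k)%N -> is_Dk G k d ->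
     zero_sum C -> (forall t, inL C t -> (t <= k)%N) -> size C = d ->
     (0 : G) \notin C).
Proof.
have [x [y [_ _ x_neq_y]]] := card_gt1P hG.
have g_neq0 : x - y != 0 by rewrite subr_eq0.
split; first by move=> B h zsB h_neq0 m; exact: is_maxL_cat_pair.
split; first by move=> k d d'; exact: is_Dk_succ_ge g_neq0.
by move=> k d C; exact: zero_notin_Dk_extremal g_neq0.
Qed.
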